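(* Let $U\subset\mathbb{R}^n$ be a bounded domain with smooth boundary and let $(u_1,u_2)\in C(\overline U)^2$ be a viscosity solution of the system (S) in $U$. Then for every $y\in U$ and $i\in\{1,2\}$, the limits $S_i^+(y)=\lim_{r\to0^+}S_i^+(y,r)$ and $S_i^-(y)=\lim_{r\to0^+}S_i^-(y,r)$ exist and satisfy $S_i^+(y)=-S_i^-(y)$.
   Context: For $\varphi\in C^2$ near $x$, set $\Delta_\infty\varphi(x)=|D\varphi(x)|^{-2}\sum_{k,l=1}^n\varphi_{x_k}\varphi_{x_l}\varphi_{x_kx_l}(x)$ when $D\varphi(x)\neq0$. Define $\Delta_\infty^+\varphi(x)=\Delta_\infty\varphi(x)$ if $D\varphi(x)\ne0$ and $\Delta_\infty^+\varphi(x)=\max\{D^2\varphi(x)v\cdot v: v\in\mathbb{S}^{n-1}\}$ if $D\varphi(x)=0$; define $\Delta_\infty^-\varphi(x)$ in the same way with $\min$ in place of $\max$. The system (S) on an open set $\Omega$ is: $-\Delta_\infty u_1+u_1-u_2=0$ and $-\Delta_\infty u_2+u_2-u_1=0$ in $\Omega$. A pair $(u_1,u_2)$ of upper semicontinuous functions on $\Omega$ is a viscosity subsolution of (S) in $\Omega$ if for each $i\in\{1,2\}$, $j=3-i$, and each $\varphi\in C^2(\Omega)$ such that $u_i-\varphi$ has a local maximum at $x_0\in\Omega$, one has $-\Delta_\infty^+\varphi(x_0)+u_i(x_0)-u_j(x_0)\le0$. A pair of lower semicontinuous functions on $\Omega$ is a viscosity supersolution if for each $i$, $j=3-i$, and each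 $\varphi\in C^2(\Omega)$ such that $u_i-\varphi$ has a local minimum at $x_0\in\Omega$, one has $-\Delta_\infty^-\varphi(x_0)+u_i(x_0)-u_j(x_0)\ge0$. A viscosity solution is a pair that is both a subsolution and a supersolution. For $y\in U$, $r>0$ with $\overline B(y,r)\subset U$: $S_i^+(y,r)=\frac{\max_{|z-y|=r}u_i(z)-u_i(y)}{r}$ and $S_i^-(y,r)=\frac{\min_{|z-y|=r}u_i(z)-u_i(y)}{r}$. *)

From Stdlib Require Import Reals Lra Lia ClassicalEpsilon.
Open Scope R_scope.

(* R^n is modelled as the subspace E_n = { x : nat -> R | x k = 0 for k >= n }
   of nat -> R; all sets considered are subsets of E_n. *)
Definition pt := nat -> R.
Definition inRn (n : nat) (x : pt) : Prop := forall k, (n <= k)%nat -> x k = 0.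

Fixpoint sumR (n : nat) (f : nat -> R) : R :=
  match n with O => 0 | S m => sumR m f + f m end.

Definition vadd (x y : pt) : pt := fun k => x k + y k.
Definition vsub (x y : pt) : pt := fun k => x k - y k.
Definition vscal (t : R) (x : pt) : pt := fun k => t * x k.
Definition ebasis (j : nat) : pt := fun k => if Nat.eqb k j then 1 else 0.

Definition rnorm (n : nat) (x : pt) : R := sqrt (sumR n (fun k => x k ^ 2)).
Definition rdist (n : nat) (x y : pt) : R := rnorm n (vsub x y).

Definition ball (n : nat) (y : pt) (r : R) (z : pt) : Prop :=
  inRn n z /\ rdist n z y < r.
Definition cball (n : nat) (y : pt) (r : R) (z : pt) : Prop :=
  inRn n z /\ rdist n z y <= r.
Definition sphere (n : nat) (y : pt) (r : R) (z : pt) : Prop :=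
  inRn n z /\ rdist n z y = r.

Definition psubset (A B : pt -> Prop) : Prop := forall x, A x -> B x.

Definition is_open (n : nat) (O : pt -> Prop) : Prop :=
  psubset O (inRn n) /\
  forall x, O x -> exists r, 0 < r /\ psubset (ball n x r) O.

Definition connected (n : nat) (U : pt -> Prop) : Prop :=
  ~ exists A B : pt -> Prop,
      is_open n A /\ is_open n B /\
      (forall x, U x -> A x \/ B x) /\
      (forall x, U x -> A x -> B x -> False) /\
      (exists x, U x /\ A x) /\ (exists x, U x /\ B x).

Definition domain (n : nat) (U : pt -> Prop) : Prop :=
  is_open n U /\ connected n U /\ exists x, U x.

Definition bdd (n : nat) (U : pt -> Prop) : Prop :=
  exists M, forall x, U x -> rnorm n x <= M.

Definition clos (n : nat) (U : pt -> Prop) (x : pt) : Prop :=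
  inRn n x /\ forall r, 0 < r -> exists z, U z /\ rdist n z x < r.

Definition boundary (n : nat) (U : pt -> Prop) (x : pt) : Prop :=
  clos n U x /\ ~ U x.

Definition continuous_on (n : nat) (A : pt -> Prop) (f : pt -> R) : Prop :=
  forall x, A x -> forall eps, 0 < eps -> exists delta, 0 < delta /\
    forall z, A z -> rdist n z x < delta -> Rabs (f z - f x) < eps.

Definition is_partial (f : pt -> R) (k : nat) (x : pt) (l : R) : Prop :=
  derivable_pt_lim (fun t => f (vadd x (vscal t (ebasis k)))) 0 l.

Definition partials_on (n : nat) (O : pt -> Prop) (f : pt -> R)
  (g : nat -> pt -> R) : Prop :=
  forall k, (k < n)%nat -> forall x, O x -> is_partial f k x (g k x).

Fixpoint Ck (n m : nat) (f : pt -> R) (O : pt -> Prop) : Prop :=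
  match m with
  | O => continuous_on n O f
  | S m' => exists g : nat -> pt -> R,
      partials_on n O f g /\ forall k, (k < n)%nat -> Ck n m' (g k) O
  end.

Definition smooth_on (n : nat) (f : pt -> R) (O : pt -> Prop) : Prop :=
  forall m, Ck n m f O.

Definition smooth_boundary (n : nat) (U : pt -> Prop) : Prop :=
  forall x0, boundary n U x0 ->
    exists r (rho : pt -> R) (g : nat -> pt -> R), 0 < r /\
      smooth_on n rho (ball n x0 r) /\
      partials_on n (ball n x0 r) rho g /\
      (forall x, ball n x0 r x -> exists k, (k < n)%nat /\ g k x <> 0) /\
      (forall x, ball n x0 r x -> (U x <-> rho x < 0)).

Definition C2data (n : nat) (Om : pt -> Prop) (phi : pt -> R)
  (p : nat -> pt -> R) (q : nat -> nat -> pt -> R) : Prop :=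
  continuous_on n Om phi /\
  partials_on n Om phi p /\
  (forall k, (k < n)%nat -> continuous_on n Om (p k)) /\
  (forall k, (k < n)%nat -> partials_on n Om (p k) (q k)) /\
  (forall k l, (k < n)%nat -> (l < n)%nat -> continuous_on n Om (q k l)).

Definition grad_sq (n : nat) (p : nat -> pt -> R) (x : pt) : R :=
  sumR n (fun k => p k x ^ 2).

Definition quad (n : nat) (q : nat -> nat -> pt -> R) (x v : pt) : R :=
  sumR n (fun k => sumR n (fun l => v k * v l * q k l x)).

Definition inf_lap (n : nat) (p : nat -> pt -> R) (q : nat -> nat -> pt -> R)
  (x : pt) : R :=
  sumR n (fun k => sumR n (fun l => p k x * p l x * q k l x)) / grad_sq n p x.

Definition unit_vec (n : nat) (v : pt) : Prop := inRn n v /\ rnorm n v = 1.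

Definition grad_zero (n : nat) (p : nat -> pt -> R) (x : pt) : Prop :=
  forall k, (k < n)%nat -> p k x = 0.

Definition inf_lap_plus (n : nat) (p : nat -> pt -> R)
  (q : nat -> nat -> pt -> R) (x : pt) (L : R) : Prop :=
  (~ grad_zero n p x /\ L = inf_lap n p q x) \/
  (grad_zero n p x /\ (exists v, unit_vec n v /\ quad n q x v = L) /\
     forall v, unit_vec n v -> quad n q x v <= L).

Definition inf_lap_minus (n : nat) (p : nat -> pt -> R)
  (q : nat -> nat -> pt -> R) (x : pt) (L : R) : Prop :=
  (~ grad_zero n p x /\ L = inf_lap n p q x) \/
  (grad_zero n p x /\ (exists v, unit_vec n v /\ quad n q x v = L) /\
     forall v, unit_vec n v -> L <= quad n q x v).

Definition loc_max (n : nat) (Om : pt -> Prop) (f : pt -> R) (x0 : pt) : Prop :=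
  exists d, 0 < d /\ forall x, Om x -> rdist n x x0 < d -> f x <= f x0.
Definition loc_min (n : nat) (Om : pt -> Prop) (f : pt -> R) (x0 : pt) : Prop :=
  exists d, 0 < d /\ forall x, Om x -> rdist n x x0 < d -> f x0 <= f x.

Definition usc_on (n : nat) (Om : pt -> Prop) (f : pt -> R) : Prop :=
  forall x, Om x -> forall eps, 0 < eps -> exists d, 0 < d /\
    forall z, Om z -> rdist n z x < d -> f z < f x + eps.
Definition lsc_on (n : nat) (Om : pt -> Prop) (f : pt -> R) : Prop :=
  forall x, Om x -> forall eps, 0 < eps -> exists d, 0 < d /\
    forall z, Om z -> rdist n z x < d -> f x - eps < f z.

Definition other (i : bool) (u1 u2 : pt -> R) : (pt -> R) * (pt -> R) :=
  if i then (u1, u2) else (u2, u1).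

Definition visc_sub (n : nat) (Om : pt -> Prop) (u1 u2 : pt -> R) : Prop :=
  usc_on n Om u1 /\ usc_on n Om u2 /\
  forall (i : bool) phi p q x0,
    C2data n Om phi p q ->
    Om x0 ->
    loc_max n Om (fun x => fst (other i u1 u2) x - phi x) x0 ->
    forall L, inf_lap_plus n p q x0 L ->
      - L + fst (other i u1 u2) x0 - snd (other i u1 u2) x0 <= 0.

Definition visc_super (n : nat) (Om : pt -> Prop) (u1 u2 : pt -> R) : Prop :=
  lsc_on n Om u1 /\ lsc_on n Om u2 /\
  forall (i : bool) phi p q x0,
    C2data n Om phi p q ->
    Om x0 ->
    loc_min n Om (fun x => fst (other i u1 u2) x - phi x) x0 ->
    forall L, inf_lap_minus n p q x0 L ->
      - L + fst (other i u1 u2) x0 - snd (other i u1 u2) x0 >= 0.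

Definition visc_sol (n : nat) (Om : pt -> Prop) (u1 u2 : pt -> R) : Prop :=
  visc_sub n Om u1 u2 /\ visc_super n Om u1 u2.

(* max / min of u over the sphere |z - y| = r (chosen by epsilon; it exists
   whenever the sphere is nonempty and u is continuous on it) *)
Definition is_max_on (A : pt -> Prop) (u : pt -> R) (M : R) : Prop :=
  (exists z, A z /\ u z = M) /\ forall z, A z -> u z <= M.
Definition is_min_on (A : pt -> Prop) (u : pt -> R) (M : R) : Prop :=
  (exists z, A z /\ u z = M) /\ forall z, A z -> M <= u z.

Definition sph_max (n : nat) (u : pt -> R) (y : pt) (r : R) : R :=
  epsilon (inhabits 0) (is_max_on (sphere n y r) u).
Definition sph_min (n : nat) (u : pt -> R) (y : pt) (r : R) : R :=
  epsilon (inhabits 0) (is_min_on (sphere n y r) u).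

Definition S_plus (n : nat) (u : pt -> R) (y : pt) (r : R) : R :=
  (sph_max n u y r - u y) / r.
Definition S_minus (n : nat) (u : pt -> R) (y : pt) (r : R) : R :=
  (sph_min n u y r - u y) / r.

Definition lim_right0 (f : R -> R) (l : R) : Prop :=
  forall eps, 0 < eps -> exists d, 0 < d /\
    forall r, 0 < r < d -> Rabs (f r - l) < eps.

From Stdlib Require Import Reals Lra Lia ClassicalEpsilon FunctionalExtensionality Classical.
From Stdlib Require Rtopology.
Open Scope R_scope.

(* Near [y] the difference [u1 - u2] is bounded by some [K], so [u = u_i] satisfies
   [-K <= -Delta_oo u <= K] in the viscosity sense on a ball [B(y, rho)].  The cones
   [a + b |w - x| - c |w - x|^2 / 2] with [c > K] satisfy [-Delta_oo v = c > K] off their vertex,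
   and comparing [u] with them on [B(x, r)] gives
     [u w <= u x + max (S^+(x, r) + c r / 2, (c + 1) r) |w - x|],
   and, applied to [-u], the symmetric lower bound in terms of [-S^-(x, r)].  At [x = y] this makes
   [f = S^+(y, .)] and [g = -S^-(y, .)] almost monotone: [limsup f] is at most the infimum [Sf] of
   the envelope [max (f R + c R / 2, (c + 1) R)], and [liminf f >= Sf] when [Sf > 0].  Using
   the lower bound at a maximum point of [u] on the small sphere, and at [y] on the doubled ball,
   gives [limsup f <= Sg] and symmetrically [limsup g <= Sf]; together with [-f <= g] this forces
   [Sf = Sg] and [f, g -> Sf]. *)

Lemma sumR_ext n f g : (forall k, (k < n)%nat -> f k = g k) -> sumR n f = sumR n g.
Proof. induction n as [|n IH]; intros H; simpl; [reflexivity|]. rewrite IH, H; auto. Qed.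

Lemma sumR_plus n f g : sumR n (fun k => f k + g k) = sumR n f + sumR n g.
Proof. induction n as [|n IH]; simpl; [ring|rewrite IH; ring]. Qed.

Lemma sumR_scal n c f : sumR n (fun k => c * f k) = c * sumR n f.
Proof. induction n as [|n IH]; simpl; [ring|rewrite IH; ring]. Qed.

Lemma sumR_const0 n : sumR n (fun _ => 0) = 0.
Proof. induction n as [|n IH]; simpl; [|rewrite IH]; ring. Qed.

Lemma sumR_le n f g : (forall k, (k < n)%nat -> f k <= g k) -> sumR n f <= sumR n g.
Proof.
  induction n as [|n IH]; intros H; simpl; [lra|].
  apply Rplus_le_compat; [apply IH; auto|apply H; lia].
Qed.

Lemma sumR_nonneg n f : (forall k, (k < n)%nat -> 0 <= f k) -> 0 <= sumR n f.
Proof. intros H. rewrite <- (sumR_const0 n). apply sumR_le, H. Qed.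

Lemma sumR_term_le n f j :
  (forall k, (k < n)%nat -> 0 <= f k) -> (j < n)%nat -> f j <= sumR n f.
Proof.
  induction n as [|n IH]; intros H Hj; simpl; [lia|].
  assert (Hsum : 0 <= sumR n f) by (apply sumR_nonneg; auto).
  assert (Hlast : 0 <= f n) by (apply H; lia).
  destruct (Nat.eq_dec j n) as [->|Hne]; [lra|].
  assert (f j <= sumR n f) by (apply IH; auto; lia). lra.
Qed.

Lemma sumR_ebasis n f j : (j < n)%nat -> sumR n (fun k => f k * ebasis j k) = f j.
Proof.
  induction n as [|n IH]; intros Hj; simpl; [lia|]. unfold ebasis at 2.
  destruct (Nat.eqb_spec n j) as [->|Hne].
  - rewrite (sumR_ext _ _ (fun _ => 0)), sumR_const0; [ring|].
    intros k Hk. unfold ebasis. destruct (Nat.eqb_spec k j); [lia|ring].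
  - rewrite IH by lia. ring.
Qed.

Lemma Rabs_le_inv x a : Rabs x <= a -> - a <= x <= a.
Proof. intros H. pose proof (Rle_abs x). pose proof (Rle_abs (- x)). rewrite Rabs_Ropp in *. lra. Qed.

Definition dot (n : nat) (x y : pt) : R := sumR n (fun k => x k * y k).

Lemma rnorm_nonneg n x : 0 <= rnorm n x.
Proof. apply sqrt_pos. Qed.

Lemma rnorm_sq n x : rnorm n x ^ 2 = sumR n (fun k => x k ^ 2).
Proof.
  unfold rnorm. rewrite <- Rsqr_pow2. apply Rsqr_sqrt.
  apply sumR_nonneg. intros. apply pow2_ge_0.
Qed.

Lemma rnorm_ext n x y : (forall k, (k < n)%nat -> x k = y k) -> rnorm n x = rnorm n y.
Proof. intros H. unfold rnorm. f_equal. apply sumR_ext. intros k Hk. rewrite H; auto. Qed.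

(* The discriminant of the nonnegative quadratic [t |-> |x + t y|^2]. *)
Lemma cauchy_schwarz n x y : dot n x y ^ 2 <= rnorm n x ^ 2 * rnorm n y ^ 2.
Proof.
  rewrite !rnorm_sq. set (a := sumR n (fun k => x k ^ 2)). set (c := sumR n (fun k => y k ^ 2)).
  assert (Hquad : forall t, 0 <= a + 2 * t * dot n x y + t ^ 2 * c).
  { intros t. unfold a, c, dot. rewrite <- sumR_scal, <- (sumR_scal _ (t ^ 2)), <- !sumR_plus.
    apply sumR_nonneg. intros k _. replace (x k ^ 2 + 2 * t * (x k * y k) + t ^ 2 * y k ^ 2)
      with ((x k + t * y k) ^ 2) by ring. apply pow2_ge_0. }
  assert (Hc0 : 0 <= c) by (apply sumR_nonneg; intros; apply pow2_ge_0).
  destruct (Req_dec c 0) as [Hc|Hc].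
  - destruct (Req_dec (dot n x y) 0) as [Hd|Hd]; [rewrite Hd; nra|].
    specialize (Hquad (- (a + 1) / (2 * dot n x y))). rewrite Hc in Hquad.
    replace (a + 2 * (- (a + 1) / (2 * dot n x y)) * dot n x y) with (-1) in Hquad
      by (field; auto). lra.
  - specialize (Hquad (- dot n x y / c)).
    replace (a + 2 * (- dot n x y / c) * dot n x y + (- dot n x y / c) ^ 2 * c)
      with ((a * c - dot n x y ^ 2) / c) in Hquad by (field; lra).
    apply Rmult_le_compat_r with (r := c) in Hquad; [|lra].
    replace ((a * c - dot n x y ^ 2) / c * c) with (a * c - dot n x y ^ 2) in Hquad by (field; lra).
    lra.
Qed.

Lemma dot_abs_le n x y : Rabs (dot n x y) <= rnorm n x * rnorm n y.
Proof.
  apply Rsqr_incr_0_var; [|apply Rmult_le_pos; apply rnorm_nonneg].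
  rewrite !Rsqr_pow2, pow2_abs, Rpow_mult_distr. apply cauchy_schwarz.
Qed.

Lemma rnorm_triangle n x y : rnorm n (vadd x y) <= rnorm n x + rnorm n y.
Proof.
  pose proof (rnorm_nonneg n x). pose proof (rnorm_nonneg n y).
  apply Rsqr_incr_0_var; [|lra]. rewrite !Rsqr_pow2, rnorm_sq.
  unfold vadd. rewrite (sumR_ext _ _ (fun k => x k ^ 2 + (2 * (x k * y k) + y k ^ 2))) by (intros; ring).
  rewrite !sumR_plus, sumR_scal, <- !rnorm_sq. fold (dot n x y).
  pose proof (dot_abs_le n x y). pose proof (Rle_abs (dot n x y)). nra.
Qed.

Lemma rdist_triangle n x y z : rdist n x z <= rdist n x y + rdist n y z.
Proof.
  unfold rdist. rewrite (rnorm_ext n (vsub x z) (vadd (vsub x y) (vsub y z))).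
  - apply rnorm_triangle.
  - intros. unfold vsub, vadd. ring.
Qed.

Lemma rdist_sym n x y : rdist n x y = rdist n y x.
Proof. unfold rdist, rnorm. f_equal. apply sumR_ext. intros. unfold vsub. ring. Qed.

Lemma rdist_refl n x : rdist n x x = 0.
Proof.
  unfold rdist, rnorm. rewrite (sumR_ext _ _ (fun _ => 0)), sumR_const0; [apply sqrt_0|].
  intros. unfold vsub. ring.
Qed.

Lemma rdist_sq n x y : rdist n x y ^ 2 = sumR n (fun k => (x k - y k) ^ 2).
Proof. apply rnorm_sq. Qed.

Lemma coord_dist_le n x y k : (k < n)%nat -> Rabs (x k - y k) <= rdist n x y.
Proof.
  intros Hk. apply Rsqr_incr_0_var; [|apply rnorm_nonneg].
  rewrite !Rsqr_pow2, pow2_abs, rdist_sq.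
  apply (sumR_term_le n (fun k => (x k - y k) ^ 2)); auto. intros. apply pow2_ge_0.
Qed.

Lemma rdist_eq0 n x y : inRn n x -> inRn n y -> rdist n x y = 0 -> x = y.
Proof.
  intros Hx Hy H. extensionality k. destruct (Nat.lt_ge_cases k n) as [Hk|Hk].
  - pose proof (coord_dist_le n x y k Hk) as Hle. rewrite H in Hle.
    pose proof (Rle_abs (x k - y k)) as Hxy. pose proof (Rle_abs (y k - x k)) as Hyx.
    rewrite Rabs_minus_sym in Hyx. lra.
  - rewrite Hx, Hy; auto.
Qed.

Lemma sphere_inhabited n x r : (1 <= n)%nat -> inRn n x -> 0 <= r -> exists z, sphere n x r z.
Proof.
  intros Hn Hx Hr. exists (vadd x (vscal r (ebasis 0))). split.
  - intros k Hk. unfold vadd, vscal, ebasis. rewrite Hx by auto.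
    destruct (Nat.eqb_spec k 0); [lia|ring].
  - unfold rdist, rnorm. rewrite (sumR_ext n _ (fun k => r ^ 2 * ebasis 0 k * ebasis 0 k)).
    + rewrite sumR_ebasis by lia. unfold ebasis. simpl. rewrite Rmult_1_r. apply sqrt_pow2, Hr.
    + intros k _. unfold vsub, vadd, vscal, ebasis. destruct (Nat.eqb k 0); ring.
Qed.

Section Continuity.

Variables (n : nat) (A : pt -> Prop).

Lemma continuous_on_const c : continuous_on n A (fun _ => c).
Proof.
  intros x _ eps Heps. exists 1. split; [lra|]. intros. rewrite Rminus_diag, Rabs_R0. exact Heps.
Qed.

Lemma continuous_on_coord k : (k < n)%nat -> continuous_on n A (fun z => z k).
Proof.
  intros Hk x _ eps Heps. exists eps. split; auto. intros z _ Hz.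
  pose proof (coord_dist_le n z x k Hk). lra.
Qed.

Lemma continuous_on_rdist x0 : continuous_on n A (fun z => rdist n z x0).
Proof.
  intros x _ eps Heps. exists eps. split; auto. intros z _ Hz.
  pose proof (rdist_triangle n z x x0). pose proof (rdist_triangle n x z x0) as Hxz.
  rewrite (rdist_sym n x z) in Hxz. apply Rabs_def1; lra.
Qed.

Lemma continuous_on_opp f : continuous_on n A f -> continuous_on n A (fun z => - f z).
Proof.
  intros Hf x Hx eps Heps. destruct (Hf x Hx eps Heps) as [d [Hd H]].
  exists d. split; auto. intros z Hz Hzx.
  replace (- f z - - f x) with (- (f z - f x)) by ring. rewrite Rabs_Ropp. auto.
Qed.

Lemma continuous_on_plus f g :
  continuous_on n A f -> continuous_on n A g -> continuous_on n A (fun z => f z + g z).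
Proof.
  intros Hf Hg x Hx eps Heps.
  destruct (Hf x Hx (eps / 2)) as [d1 [Hd1 H1]]; [lra|].
  destruct (Hg x Hx (eps / 2)) as [d2 [Hd2 H2]]; [lra|].
  exists (Rmin d1 d2). split; [apply Rmin_pos; auto|]. intros z Hz Hzx.
  specialize (H1 z Hz (Rlt_le_trans _ _ _ Hzx (Rmin_l _ _))).
  specialize (H2 z Hz (Rlt_le_trans _ _ _ Hzx (Rmin_r _ _))).
  replace (f z + g z - (f x + g x)) with ((f z - f x) + (g z - g x)) by ring.
  pose proof (Rabs_triang (f z - f x) (g z - g x)). lra.
Qed.

Lemma continuous_on_minus f g :
  continuous_on n A f -> continuous_on n A g -> continuous_on n A (fun z => f z - g z).
Proof.
  intros Hf Hg. apply (continuous_on_plus f (fun z => - g z)); auto. apply continuous_on_opp, Hg.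
Qed.

Lemma continuous_on_mult f g :
  continuous_on n A f -> continuous_on n A g -> continuous_on n A (fun z => f z * g z).
Proof.
  intros Hf Hg x Hx eps Heps.
  set (Mf := Rabs (f x) + 1). set (Mg := Rabs (g x) + 1).
  assert (HMf : 0 < Mf) by (unfold Mf; pose proof (Rabs_pos (f x)); lra).
  assert (HMg : 0 < Mg) by (unfold Mg; pose proof (Rabs_pos (g x)); lra).
  destruct (Hf x Hx (Rmin 1 (eps / (2 * Mg)))) as [d1 [Hd1 H1]].
  { apply Rmin_pos; [lra|]. apply Rdiv_lt_0_compat; lra. }
  destruct (Hg x Hx (eps / (2 * Mf))) as [d2 [Hd2 H2]]; [apply Rdiv_lt_0_compat; lra|].
  exists (Rmin d1 d2). split; [apply Rmin_pos; auto|]. intros z Hz Hzx.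
  specialize (H1 z Hz (Rlt_le_trans _ _ _ Hzx (Rmin_l _ _))).
  specialize (H2 z Hz (Rlt_le_trans _ _ _ Hzx (Rmin_r _ _))).
  pose proof (Rmin_l 1 (eps / (2 * Mg))). pose proof (Rmin_r 1 (eps / (2 * Mg))).
  assert (Hfz : Rabs (f z) <= Mf).
  { unfold Mf. replace (f z) with (f x + (f z - f x)) by ring.
    pose proof (Rabs_triang (f x) (f z - f x)). lra. }
  replace (f z * g z - f x * g x) with (f z * (g z - g x) + g x * (f z - f x)) by ring.
  eapply Rle_lt_trans; [apply Rabs_triang|]. rewrite !Rabs_mult.
  assert (Rabs (f z) * Rabs (g z - g x) <= Mf * (eps / (2 * Mf)))
    by (apply Rmult_le_compat; try apply Rabs_pos; lra).
  assert (Rabs (g x) * Rabs (f z - f x) < Mg * (eps / (2 * Mg))).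
  { apply Rle_lt_trans with (Mg * Rabs (f z - f x)).
    - apply Rmult_le_compat_r; [apply Rabs_pos|unfold Mg; lra].
    - apply Rmult_lt_compat_l; lra. }
  replace (Mf * (eps / (2 * Mf))) with (eps / 2) in * by (field; lra).
  replace (Mg * (eps / (2 * Mg))) with (eps / 2) in * by (field; lra). lra.
Qed.

Lemma continuous_on_sumR m (F : nat -> pt -> R) :
  (forall k, (k < m)%nat -> continuous_on n A (F k)) ->
  continuous_on n A (fun z => sumR m (fun k => F k z)).
Proof.
  induction m as [|m IH]; intros H; simpl.
  - apply continuous_on_const.
  - apply (continuous_on_plus (fun z => sumR m (fun k => F k z)) (F m)); [apply IH; auto|apply H; lia].
Qed.

Lemma continuous_on_subset (B : pt -> Prop) f :
  psubset B A -> continuous_on n A f -> continuous_on n B f.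
Proof.
  intros HBA Hf x Hx eps Heps. destruct (Hf x (HBA x Hx) eps Heps) as [d [Hd H]].
  exists d. split; auto.
Qed.

End Continuity.

Lemma derivable_pt_lim_quadratic (F : R -> R) a b c :
  (forall t, F t = a + b * t + c * t ^ 2) -> derivable_pt_lim F 0 b.
Proof.
  intros HF.
  assert (Hd : derivable_pt_lim (fun t => a + b * t + c * t ^ 2) 0
                 (0 + b * 1 + c * (INR 2 * 0 ^ Nat.pred 2))).
  { apply derivable_pt_lim_plus; [apply derivable_pt_lim_plus|].
    - apply derivable_pt_lim_const.
    - apply derivable_pt_lim_scal, derivable_pt_lim_id.
    - apply derivable_pt_lim_scal, derivable_pt_lim_pow. }
  replace (0 + b * 1 + c * (INR 2 * 0 ^ Nat.pred 2)) with b in Hd by (simpl; ring).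
  apply (derivable_pt_lim_ext _ F _ _ (fun t => eq_sym (HF t)) Hd).
Qed.

Definition coord_along (n : nat) (e x w : pt) : R := sumR n (fun k => e k * (w k - x k)).

Section ConeTest.

Variables (n : nat) (x e : pt) (a b ga mu : R).

(* For a unit vector [e], [coord_along n e x w = |w - x|] on the ray [x + t e], so these quadratic
   polynomials can touch cones [a + b |w - x| + ga' |w - x|^2] along that ray. *)
Definition cone_test (w : pt) : R :=
  a + b * coord_along n e x w + ga * rdist n w x ^ 2 + mu * coord_along n e x w ^ 2.

Definition cone_test_grad (k : nat) (w : pt) : R :=
  b * e k + 2 * ga * (w k - x k) + 2 * mu * coord_along n e x w * e k.

Definition cone_test_hess (k l : nat) (w : pt) : R :=
  2 * ga * ebasis l k + 2 * mu * e k * e l.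

Let shift (w : pt) (t : R) (j : nat) : pt := vadd w (vscal t (ebasis j)).

Lemma coord_along_shift w t j : (j < n)%nat ->
  coord_along n e x (shift w t j) = coord_along n e x w + t * e j.
Proof.
  intros Hj. unfold coord_along, shift, vadd, vscal.
  rewrite (sumR_ext _ _ (fun k => e k * (w k - x k) + t * (e k * ebasis j k))) by (intros; ring).
  rewrite sumR_plus, sumR_scal, sumR_ebasis; auto.
Qed.

Lemma rdist_sq_shift w t j : (j < n)%nat ->
  rdist n (shift w t j) x ^ 2 = rdist n w x ^ 2 + t * (2 * (w j - x j)) + t ^ 2.
Proof.
  intros Hj. rewrite !rdist_sq. unfold shift, vadd, vscal.
  rewrite (sumR_ext _ _ (fun k => (w k - x k) ^ 2 + (t * (2 * (w k - x k) * ebasis j k)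
                                    + t ^ 2 * (1 * ebasis j k)))).
  - rewrite !sumR_plus, (sumR_scal _ t), (sumR_scal _ (t ^ 2)), !sumR_ebasis by auto. ring.
  - intros k _. unfold ebasis. destruct (Nat.eqb k j); ring.
Qed.

Lemma cone_test_partial w j : (j < n)%nat -> is_partial cone_test j w (cone_test_grad j w).
Proof.
  intros Hj. apply (derivable_pt_lim_quadratic _ (cone_test w) _ (ga + mu * e j ^ 2)).
  intros t. fold (shift w t j). unfold cone_test, cone_test_grad.
  rewrite coord_along_shift, rdist_sq_shift by auto. ring.
Qed.

Lemma cone_test_grad_partial k w j : (j < n)%nat ->
  is_partial (cone_test_grad k) j w (cone_test_hess k j w).
Proof.
  intros Hj. apply (derivable_pt_lim_quadratic _ (cone_test_grad k w) _ 0).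
  intros t. fold (shift w t j). unfold cone_test_grad, cone_test_hess.
  rewrite coord_along_shift by auto. unfold shift, vadd, vscal. ring.
Qed.

Lemma continuous_on_coord_along Om : continuous_on n Om (coord_along n e x).
Proof.
  apply continuous_on_sumR. intros k Hk.
  apply continuous_on_mult; [apply continuous_on_const|].
  apply continuous_on_minus; [apply continuous_on_coord; auto|apply continuous_on_const].
Qed.

Lemma cone_test_C2 Om : C2data n Om cone_test cone_test_grad cone_test_hess.
Proof.
  pose proof (continuous_on_coord_along Om) as Hc.
  pose proof (continuous_on_rdist n Om x) as Hd.
  repeat split.
  - unfold cone_test. repeat apply continuous_on_plus; repeat apply continuous_on_mult;
      auto using continuous_on_const.
  - intros j Hj w _. apply cone_test_partial; auto.
  - intros k Hk. unfold cone_test_grad. repeat apply continuous_on_plus;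
      repeat apply continuous_on_mult; auto using continuous_on_const.
    apply continuous_on_minus; [apply continuous_on_coord; auto|apply continuous_on_const].
  - intros k _ j Hj w _. apply cone_test_grad_partial; auto.
  - intros k l _ _. apply continuous_on_const.
Qed.

End ConeTest.

Lemma ebasis_sym j k : ebasis j k = ebasis k j.
Proof. unfold ebasis. rewrite Nat.eqb_sym. reflexivity. Qed.

Definition cone (n : nat) (x : pt) (a b c : R) (w : pt) : R :=
  a + b * rdist n w x - c / 2 * rdist n w x ^ 2.

Section Touching.

Variables (n : nat) (x x0 : pt) (b c : R).
Hypothesis Hr0 : 0 < rdist n x0 x.

Let r0 := rdist n x0 x.
Let r0_pos : 0 < r0 := Hr0.
Let e : pt := fun k => (x0 k - x k) / r0.

Definition touch_test (a : R) : pt -> R := cone_test n x e a b (b / r0 - c / 2) (- (b / r0)).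
Definition touch_grad : nat -> pt -> R := cone_test_grad n x e b (b / r0 - c / 2) (- (b / r0)).
Definition touch_hess : nat -> nat -> pt -> R := cone_test_hess e (b / r0 - c / 2) (- (b / r0)).

Lemma direction_unit : sumR n (fun k => e k ^ 2) = 1.
Proof.
  unfold e. rewrite (sumR_ext _ _ (fun k => / r0 ^ 2 * (x0 k - x k) ^ 2)) by (intros; field; lra).
  rewrite sumR_scal, <- rdist_sq. fold r0. field. lra.
Qed.

Lemma direction_rnorm : rnorm n e = 1.
Proof. unfold rnorm. rewrite direction_unit. apply sqrt_1. Qed.

Lemma coord_along_abs_le y w : Rabs (coord_along n e y w) <= rdist n w y.
Proof. rewrite <- (Rmult_1_l (rdist n w y)), <- direction_rnorm. apply (dot_abs_le n e (vsub w y)). Qed.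

Lemma coord_along_touch : coord_along n e x x0 = r0.
Proof.
  unfold coord_along. rewrite (sumR_ext _ _ (fun k => r0 * e k ^ 2)).
  - rewrite sumR_scal, direction_unit. ring.
  - intros. unfold e. field. lra.
Qed.

(* [t + (s^2 - t^2) / r0 >= s] for [r0 / 2 <= t <= s], where [s = |w - x|] and [t] is the
   coordinate of [w - x] along the ray through [x0]. *)
Lemma touch_test_ge a w : 0 <= b -> rdist n w x0 < r0 / 2 -> cone n x a b c w <= touch_test a w.
Proof.
  intros Hb Hw. unfold touch_test, cone, cone_test.
  set (s := rdist n w x). set (t := coord_along n e x w).
  assert (Hts : t <= s) by (apply Rle_trans with (Rabs t); [apply Rle_abs|apply coord_along_abs_le]).
  assert (Ht : r0 / 2 <= t).
  { assert (Hsplit : t = r0 + coord_along n e x0 w).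
    { unfold t. rewrite <- coord_along_touch. unfold coord_along.
      rewrite <- sumR_plus. apply sumR_ext. intros. ring. }
    pose proof (coord_along_abs_le x0 w) as Habs. apply Rabs_le_inv in Habs. lra. }
  assert (Hgap : 0 <= t + (s ^ 2 - t ^ 2) / r0 - s).
  { replace (t + (s ^ 2 - t ^ 2) / r0 - s) with ((s - t) * (s + t - r0) / r0) by (field; lra).
    apply Rmult_le_pos; [apply Rmult_le_pos; lra|apply Rlt_le, Rinv_0_lt_compat; lra]. }
  assert (Hdiff : b * (t + (s ^ 2 - t ^ 2) / r0 - s) =
                  a + b * t + (b / r0 - c / 2) * s ^ 2 + - (b / r0) * t ^ 2
                  - (a + b * s - c / 2 * s ^ 2))
    by (field; lra).
  pose proof (Rmult_le_pos b _ Hb Hgap). lra.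
Qed.

Lemma touch_test_at a : touch_test a x0 = cone n x a b c x0.
Proof.
  unfold touch_test, cone, cone_test. rewrite coord_along_touch. fold r0. field. lra.
Qed.

Lemma touch_grad_at k : touch_grad k x0 = (b - c * r0) * e k.
Proof.
  unfold touch_grad, cone_test_grad. rewrite coord_along_touch.
  replace (x0 k - x k) with (r0 * e k) by (unfold e; field; lra). field. lra.
Qed.

Lemma touch_inf_lap : b <> c * r0 -> inf_lap_plus n touch_grad touch_hess x0 (- c).
Proof.
  intros Hb. set (G := b - c * r0). assert (HG : G <> 0) by (unfold G; lra).
  left. split.
  - intros Hzero. apply HG.
    assert (Hsum : sumR n (fun k => touch_grad k x0 ^ 2) = 0).
    { rewrite (sumR_ext _ _ (fun _ => 0)); [apply sumR_const0|].
      intros k Hk. rewrite (Hzero k Hk). ring. }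
    rewrite (sumR_ext _ _ (fun k => G ^ 2 * e k ^ 2)), sumR_scal, direction_unit in Hsum
      by (intros; rewrite touch_grad_at; fold G; ring).
    nra.
  - unfold inf_lap, grad_sq.
    rewrite (sumR_ext n (fun k => touch_grad k x0 ^ 2) (fun k => G ^ 2 * e k ^ 2)),
      sumR_scal, direction_unit
      by (intros; rewrite touch_grad_at; fold G; ring).
    rewrite (sumR_ext _ _ (fun k => G ^ 2 * (2 * (b / r0 - c / 2) + 2 * - (b / r0)) * e k ^ 2)).
    + rewrite sumR_scal, direction_unit. field. split; [lra|]. intros HG2. apply HG. nra.
    + intros k Hk.
      rewrite (sumR_ext _ _ (fun l => (G ^ 2 * e k * 2 * (b / r0 - c / 2) * e l) * ebasis k l
                                      + (G ^ 2 * e k ^ 2 * 2 * - (b / r0)) * e l ^ 2)).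
      * rewrite sumR_plus, sumR_ebasis, sumR_scal, direction_unit by auto. ring.
      * intros l _. unfold touch_hess, cone_test_hess. rewrite !touch_grad_at, (ebasis_sym l k).
        fold G. ring.
Qed.

End Touching.

Definition strictly_increasing (phi : nat -> nat) : Prop := forall m, (phi m < phi (S m))%nat.

Lemma strictly_increasing_ge phi : strictly_increasing phi -> forall m, (m <= phi m)%nat.
Proof. intros H m. induction m as [|m IH]; [lia|]. specialize (H m). lia. Qed.

Lemma strictly_increasing_comp phi psi :
  strictly_increasing phi -> strictly_increasing psi -> strictly_increasing (fun m => phi (psi m)).
Proof.
  intros Hphi Hpsi m. specialize (Hpsi m).
  induction Hpsi as [|p _ IH]; [apply Hphi|]. specialize (Hphi p). lia.
Qed.

Lemma Un_cv_subseq a l phi : strictly_increasing phi -> Un_cv a l -> Un_cv (fun m => a (phi m)) l.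
Proof.
  intros Hphi H eps Heps. destruct (H eps Heps) as [N HN]. exists N. intros m Hm.
  apply HN. pose proof (strictly_increasing_ge phi Hphi m). lia.
Qed.

Lemma extract_subsequence (P : nat -> nat -> Prop) :
  (forall m N, exists p, (N <= p)%nat /\ P m p) ->
  exists phi, strictly_increasing phi /\ forall m, P m (phi m).
Proof.
  intros H. destruct (choice (fun (mN : nat * nat) p => (snd mN <= p)%nat /\ P (fst mN) p))
    as [ch Hch]; [intros [m N]; apply H|].
  exists (fix phi m := match m with O => ch (O, O) | S m' => ch (S m', S (phi m')) end).
  split.
  - intros m. apply (Hch (S m, _)).
  - intros [|m]; [apply (Hch (O, O))|apply (Hch (S m, _))].
Qed.

Lemma inv_INR_succ_small eps : 0 < eps -> exists N, forall m, (N <= m)%nat -> / (INR m + 1) < eps.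
Proof.
  intros Heps. destruct (archimed_cor1 eps Heps) as [N [HN HN0]]. exists N. intros m Hm.
  apply Rle_lt_trans with (/ INR N); auto. apply Rinv_le_contravar; [apply lt_0_INR; auto|].
  apply le_INR in Hm. lra.
Qed.

Lemma bolzano_weierstrass_R (a : nat -> R) B : (forall m, Rabs (a m) <= B) ->
  exists phi l, strictly_increasing phi /\ Un_cv (fun m => a (phi m)) l.
Proof.
  intros Hb.
  destruct (Rtopology.Bolzano_Weierstrass a (fun t => - B <= t <= B) (Rtopology.compact_P3 (- B) B))
    as [l Hl]; [intros m; apply Rabs_le_inv, Hb|].
  destruct (extract_subsequence (fun m p => Rabs (a p - l) < / (INR m + 1))) as [phi [Hphi HP]].
  { intros m N.
    assert (Hpos : 0 < / (INR m + 1)) by (apply Rinv_0_lt_compat; pose proof (pos_INR m); lra).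
    destruct (Hl (Rtopology.disc l (mkposreal _ Hpos)) N) as [p Hp];
      [exists (mkposreal _ Hpos); intros t Ht; exact Ht|].
    exists p. exact Hp. }
  exists phi, l. split; auto. intros eps Heps. destruct (inv_INR_succ_small eps Heps) as [N HN].
  exists N. intros m Hm. specialize (HP m). specialize (HN m Hm). unfold R_dist. lra.
Qed.

Lemma bolzano_weierstrass_coords n (z : nat -> pt) (B : nat -> R) :
  (forall m k, (k < n)%nat -> Rabs (z m k) <= B k) ->
  forall j, (j <= n)%nat -> exists phi (l : pt), strictly_increasing phi /\
    forall k, (k < j)%nat -> Un_cv (fun m => z (phi m) k) (l k).
Proof.
  intros Hb j. induction j as [|j IH]; intros Hj.
  - exists (fun m => m), (fun _ => 0). split; [intros m; lia|intros; lia].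
  - destruct IH as [phi [l [Hphi Hl]]]; [lia|].
    destruct (bolzano_weierstrass_R (fun m => z (phi m) j) (B j)) as [psi [lj [Hpsi Hc]]];
      [intros; apply Hb; lia|].
    exists (fun m => phi (psi m)), (fun k => if Nat.eqb k j then lj else l k).
    split; [apply strictly_increasing_comp; auto|].
    intros k Hk. destruct (Nat.eqb_spec k j) as [->|Hne]; [exact Hc|].
    apply (Un_cv_subseq (fun m => z (phi m) k)); auto. apply Hl. lia.
Qed.

Lemma Un_cv_const c : Un_cv (fun _ => c) c.
Proof. intros eps Heps. exists O. intros. unfold R_dist. rewrite Rminus_diag, Rabs_R0. exact Heps. Qed.

Lemma Un_cv_rdist n (z : nat -> pt) (l : pt) :
  (forall k, (k < n)%nat -> Un_cv (fun m => z m k) (l k)) -> Un_cv (fun m => rdist n (z m) l) 0.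
Proof.
  intros Hz. rewrite <- sqrt_0. apply continuity_seq; [apply continuity_pt_sqrt; lra|].
  assert (Hcoord : forall k, (k < n)%nat -> Un_cv (fun m => vsub (z m) l k ^ 2) 0).
  { intros k Hk. replace 0 with ((l k - l k) * ((l k - l k) * 1)) by ring. unfold vsub. simpl pow.
    assert (Hd : Un_cv (fun m => z m k - l k) (l k - l k)) by (apply CV_minus; auto using Un_cv_const).
    apply CV_mult; [|apply CV_mult]; auto using Un_cv_const. }
  assert (Hsum : forall j, (j <= n)%nat -> Un_cv (fun m => sumR j (fun k => vsub (z m) l k ^ 2)) 0).
  { induction j as [|j IH]; intros Hj; simpl; [apply Un_cv_const|].
    rewrite <- (Rplus_0_r 0). apply CV_plus; [apply IH|apply Hcoord]; lia. }
  apply Hsum. lia.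
Qed.

Definition closed_set (n : nat) (A : pt -> Prop) : Prop :=
  forall z, inRn n z -> (forall eps, 0 < eps -> exists w, A w /\ rdist n w z < eps) -> A z.

Lemma sphere_sub_cball n x r : psubset (sphere n x r) (cball n x r).
Proof. intros z [Hz Hzr]. split; [exact Hz|right; exact Hzr]. Qed.

Lemma cball_closed n x r : closed_set n (cball n x r).
Proof.
  intros z Hz Happ. split; auto. apply Rnot_lt_le. intros Hlt.
  destruct (Happ (rdist n z x - r)) as [w [[_ Hw] Hwz]]; [lra|].
  pose proof (rdist_triangle n z w x). rewrite (rdist_sym n z w) in *. lra.
Qed.

Lemma sphere_closed n x r : closed_set n (sphere n x r).
Proof.
  intros z Hz Happ. split; auto.
  assert (Hnear : forall eps, 0 < eps -> Rabs (rdist n z x - r) < eps).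
  { intros eps Heps. destruct (Happ eps Heps) as [w [[_ Hw] Hwz]].
    pose proof (rdist_triangle n z w x). pose proof (rdist_triangle n w z x).
    rewrite (rdist_sym n z w) in *. apply Rabs_def1; lra. }
  destruct (Req_dec (rdist n z x) r) as [|Hne]; auto.
  assert (Hpos : 0 < Rabs (rdist n z x - r)) by (apply Rabs_pos_lt; lra).
  specialize (Hnear _ Hpos). lra.
Qed.

Section Compactness.

Variables (n : nat) (A : pt -> Prop) (x : pt) (r : R).
Hypothesis HA_bounded : psubset A (cball n x r).
Hypothesis HA_closed : closed_set n A.

Lemma exists_convergent_subsequence (z : nat -> pt) : (forall m, A (z m)) ->
  exists phi l, strictly_increasing phi /\ A l /\ Un_cv (fun m => rdist n (z (phi m)) l) 0.
Proof.
  intros Hz.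
  destruct (bolzano_weierstrass_coords n z (fun k => Rabs (x k) + r)) with (j := n)
    as [phi [l [Hphi Hl]]]; [|lia|].
  { intros m k Hk. destruct (HA_bounded _ (Hz m)) as [_ Hzx].
    pose proof (coord_dist_le n (z m) x k Hk).
    replace (z m k) with (x k + (z m k - x k)) by ring.
    pose proof (Rabs_triang (x k) (z m k - x k)). lra. }
  set (l' := fun k => if Nat.ltb k n then l k else 0).
  assert (Hcv : Un_cv (fun m => rdist n (z (phi m)) l') 0).
  { apply Un_cv_rdist. intros k Hk. unfold l'. destruct (Nat.ltb_spec k n); [auto|lia]. }
  exists phi, l'. repeat split; auto.
  apply HA_closed.
  - intros k Hk. unfold l'. destruct (Nat.ltb_spec k n); [lia|auto].
  - intros eps Heps. destruct (Hcv eps Heps) as [N HN]. exists (z (phi N)). split; auto.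
    specialize (HN N (Nat.le_refl N)). unfold R_dist in HN. rewrite Rminus_0_r in HN.
    apply Rabs_def2 in HN. lra.
Qed.

Lemma continuous_cluster_value f (z : nat -> pt) :
  continuous_on n A f -> (forall m, A (z m)) ->
  exists l, A l /\ forall eps N, 0 < eps -> exists m, (N <= m)%nat /\ f (z m) < f l + eps.
Proof.
  intros Hf Hz. destruct (exists_convergent_subsequence z Hz) as [phi [l [Hphi [Hl Hcv]]]].
  exists l. split; auto. intros eps N Heps.
  destruct (Hf l Hl eps Heps) as [d [Hd Hfl]]. destruct (Hcv d Hd) as [N' HN'].
  exists (phi (Nat.max N N')).
  split; [pose proof (strictly_increasing_ge phi Hphi (Nat.max N N')); lia|].
  specialize (HN' _ (Nat.le_max_r N N')). unfold R_dist in HN'. rewrite Rminus_0_r in HN'.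
  apply Rabs_def2 in HN'. specialize (Hfl _ (Hz _) (proj1 HN')). apply Rabs_def2 in Hfl. lra.
Qed.

Lemma continuous_bounded_above f : continuous_on n A f -> exists M, forall w, A w -> f w <= M.
Proof.
  intros Hf. apply NNPP. intros Hunb.
  assert (Hbig : forall m : nat, exists w, A w /\ INR m < f w).
  { intros m. apply NNPP. intros Hno. apply Hunb. exists (INR m). intros w Hw.
    apply Rnot_lt_le. intros Hlt. apply Hno. eauto. }
  destruct (choice _ Hbig) as [z Hz].
  destruct (continuous_cluster_value f z Hf (fun m => proj1 (Hz m))) as [l [Hl Hclus]].
  destruct (INR_unbounded (f l + 1)) as [N HN].
  destruct (Hclus 1 N ltac:(lra)) as [m [Hm Hzm]].
  pose proof (proj2 (Hz m)). apply le_INR in Hm. lra.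
Qed.

Lemma continuous_attains_max f : continuous_on n A f -> (exists z, A z) ->
  exists z, A z /\ forall w, A w -> f w <= f z.
Proof.
  intros Hf [z0 Hz0]. destruct (continuous_bounded_above f Hf) as [M HM].
  destruct (completeness (fun t => exists w, A w /\ t = f w)) as [S [HS_ub HS_lub]].
  { exists M. intros t [w [Hw ->]]. auto. }
  { exists (f z0), z0. auto. }
  assert (Hclose : forall m : nat, exists w, A w /\ S - / (INR m + 1) < f w).
  { intros m. assert (Hpos : 0 < / (INR m + 1)) by (apply Rinv_0_lt_compat; pose proof (pos_INR m); lra).
    apply NNPP. intros Hno.
    assert (S <= S - / (INR m + 1)); [|lra].
    apply HS_lub. intros t [w [Hw ->]]. apply Rnot_lt_le. intros Hlt. apply Hno. eauto. }
  destruct (choice _ Hclose) as [z Hz].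
  destruct (continuous_cluster_value f z Hf (fun m => proj1 (Hz m))) as [l [Hl Hclus]].
  exists l. split; auto. intros w Hw.
  apply Rle_trans with S; [apply HS_ub; eauto|]. apply Rnot_lt_le. intros Hlt.
  set (eps := (S - f l) / 2).
  destruct (inv_INR_succ_small eps ltac:(unfold eps; lra)) as [N HN].
  destruct (Hclus eps N ltac:(unfold eps; lra)) as [m [Hm Hzm]].
  pose proof (proj2 (Hz m)). specialize (HN m Hm). unfold eps in *. lra.
Qed.

End Compactness.

Lemma exists_sphere_max n u x r : (1 <= n)%nat -> inRn n x -> 0 <= r ->
  continuous_on n (sphere n x r) u -> exists M, is_max_on (sphere n x r) u M.
Proof.
  intros Hn Hx Hr Hu.
  destruct (continuous_attains_max n (sphere n x r) x r (sphere_sub_cball n x r)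
    (sphere_closed n x r) u Hu (sphere_inhabited n x r Hn Hx Hr)) as [z [Hz Hmax]].
  exists (u z). split; eauto.
Qed.

Lemma exists_sphere_min n u x r : (1 <= n)%nat -> inRn n x -> 0 <= r ->
  continuous_on n (sphere n x r) u -> exists m, is_min_on (sphere n x r) u m.
Proof.
  intros Hn Hx Hr Hu.
  destruct (exists_sphere_max n (fun z => - u z) x r Hn Hx Hr (continuous_on_opp n _ u Hu))
    as [M [[z [Hz HzM]] Hmax]].
  exists (u z). split; eauto. intros w Hw. specialize (Hmax w Hw). lra.
Qed.

Lemma is_max_on_opp A u M : is_max_on A u M -> is_min_on A (fun z => - u z) (- M).
Proof.
  intros [[z [Hz HzM]] Hmax]. split; [exists z; split; auto; lra|].
  intros w Hw. specialize (Hmax w Hw). lra.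
Qed.

Lemma is_min_on_opp A u m : is_min_on A u m -> is_max_on A (fun z => - u z) (- m).
Proof.
  intros [[z [Hz Hzm]] Hmin]. split; [exists z; split; auto; lra|].
  intros w Hw. specialize (Hmin w Hw). lra.
Qed.

Definition visc_inf_sub (n : nat) (U O : pt -> Prop) (K : R) (u : pt -> R) : Prop :=
  forall phi p q x0, C2data n U phi p q -> O x0 -> loc_max n U (fun x => u x - phi x) x0 ->
    forall L, inf_lap_plus n p q x0 L -> - L <= K.

Definition visc_inf_super (n : nat) (U O : pt -> Prop) (K : R) (u : pt -> R) : Prop :=
  forall phi p q x0, C2data n U phi p q -> O x0 -> loc_min n U (fun x => u x - phi x) x0 ->
    forall L, inf_lap_minus n p q x0 L -> - K <= - L.

Lemma sumR_opp n f : sumR n (fun k => - f k) = - sumR n f.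
Proof.
  replace (- sumR n f) with (-1 * sumR n f) by ring. rewrite <- sumR_scal.
  apply sumR_ext. intros. ring.
Qed.

Lemma C2data_opp n Om phi p q : C2data n Om phi p q ->
  C2data n Om (fun x => - phi x) (fun k x => - p k x) (fun k l x => - q k l x).
Proof.
  intros [Hphi [Hp [Hpc [Hq Hqc]]]]. repeat split.
  - apply continuous_on_opp, Hphi.
  - intros k Hk x Hx. apply derivable_pt_lim_opp, Hp; auto.
  - intros k Hk. apply continuous_on_opp, Hpc, Hk.
  - intros k Hk l Hl x Hx. apply derivable_pt_lim_opp, Hq; auto.
  - intros k l Hk Hl. apply continuous_on_opp, Hqc; auto.
Qed.

Lemma inf_lap_plus_opp n p q x L : inf_lap_plus n p q x L ->
  inf_lap_minus n (fun k x => - p k x) (fun k l x => - q k l x) x (- L).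
Proof.
  assert (Hgrad : grad_zero n (fun k x => - p k x) x <-> grad_zero n p x).
  { split; intros H k Hk; specialize (H k Hk); simpl in *; lra. }
  assert (Hquad : forall v, quad n (fun k l x => - q k l x) x v = - quad n q x v).
  { intros v. unfold quad. rewrite <- sumR_opp. apply sumR_ext. intros k _.
    rewrite <- sumR_opp. apply sumR_ext. intros. ring. }
  intros [[Hnz ->]|[Hz [[v [Hv HvL]] Hmax]]].
  - left. split; [rewrite Hgrad; auto|]. unfold inf_lap, grad_sq.
    rewrite (sumR_ext n (fun k => (- p k x) ^ 2) (fun k => p k x ^ 2)) by (intros; ring).
    rewrite <- Rdiv_opp_l, <- sumR_opp. f_equal. apply sumR_ext. intros k _.
    rewrite <- sumR_opp. apply sumR_ext. intros. ring.
  - right. split; [rewrite Hgrad; auto|]. split.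
    + exists v. rewrite Hquad, HvL. auto.
    + intros w Hw. rewrite Hquad. specialize (Hmax w Hw). lra.
Qed.

Lemma visc_inf_super_opp n U O K u :
  visc_inf_super n U O K u -> visc_inf_sub n U O K (fun x => - u x).
Proof.
  intros Hsup phi p q x0 Hphi Hx0 [d [Hd Hmax]] L HL.
  assert (Hmin : loc_min n U (fun x => u x - - phi x) x0).
  { exists d. split; auto. intros w Hw Hwd. specialize (Hmax w Hw Hwd). simpl in Hmax. lra. }
  pose proof (Hsup _ _ _ x0 (C2data_opp n U phi p q Hphi) Hx0 Hmin _ (inf_lap_plus_opp n p q x0 L HL)).
  lra.
Qed.

Lemma continuous_on_cone n A x a b c : continuous_on n A (cone n x a b c).
Proof.
  unfold cone. pose proof (continuous_on_rdist n A x) as Hd.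
  apply continuous_on_minus; [apply continuous_on_plus|];
    repeat apply continuous_on_mult; auto using continuous_on_const.
Qed.

(* The slope of the comparison cone in [slope_estimate]: [b >= s + c r / 2] lets the cone dominate
   [u] on the sphere [|w - x| = r] when [s = (max - u x) / r], and [b >= (c + 1) r > c r] keeps
   the gradient [b - c |w - x|] of the cone positive inside. *)
Definition slope_bound (c s r : R) : R := Rmax (s + c * r / 2) ((c + 1) * r).

Section ConeComparison.

Variables (n : nat) (U O : pt -> Prop) (K : R) (u : pt -> R).
Hypothesis HU : psubset U (inRn n).
Hypothesis Hcont : continuous_on n O u.
Hypothesis Hsub : visc_inf_sub n U O K u.

(* A cone with [c > K] is a strict supersolution away from its vertex: at an interior maximum
   of [u - cone] the touching test function would have [-Delta_oo = c > K]. *)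
Lemma comparison_with_cones x r a b c :
  inRn n x -> 0 < r -> psubset (cball n x r) O -> 0 <= c -> K < c -> c * r < b -> u x <= a ->
  (forall w, sphere n x r w -> u w <= cone n x a b c w) ->
  forall w, cball n x r w -> u w <= cone n x a b c w.
Proof.
  intros Hx Hr Hball Hc HKc Hb Hux Hsph w1 Hw1. apply Rnot_lt_le. intros Hlt.
  destruct (continuous_attains_max n (cball n x r) x r (fun _ H => H) (cball_closed n x r)
    (fun w => u w - cone n x a b c w)) as [x0 [Hx0 Hmax]].
  { apply continuous_on_minus; [apply (continuous_on_subset n O); auto|apply continuous_on_cone]. }
  { exists x. split; auto. rewrite rdist_refl. lra. }
  assert (Hpos : 0 < u x0 - cone n x a b c x0) by (specialize (Hmax w1 Hw1); lra).
  assert (Hb0 : 0 <= b) by nra.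
  set (r0 := rdist n x0 x).
  assert (Hr0 : 0 < r0).
  { destruct (Rle_lt_or_eq_dec 0 r0) as [|Hr0]; [apply rnorm_nonneg|auto|].
    rewrite (rdist_eq0 n x0 x (proj1 Hx0) Hx (eq_sym Hr0)) in Hpos.
    unfold cone in Hpos. rewrite rdist_refl in Hpos. lra. }
  assert (Hr0r : r0 < r).
  { destruct (Rle_lt_or_eq_dec r0 r) as [|Hr0r]; [apply Hx0|auto|].
    specialize (Hsph x0 (conj (proj1 Hx0) Hr0r)). lra. }
  assert (Hloc : loc_max n U (fun w => u w - touch_test n x x0 b c a w) x0).
  { exists (Rmin (r - r0) (r0 / 2)). split; [apply Rmin_pos; lra|]. intros w Hw Hwx0.
    pose proof (Rmin_l (r - r0) (r0 / 2)). pose proof (Rmin_r (r - r0) (r0 / 2)).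
    assert (Hwball : cball n x r w).
    { split; [apply HU; auto|]. pose proof (rdist_triangle n w x0 x) as Htri. fold r0 in Htri. lra. }
    pose proof (touch_test_ge n x x0 b c Hr0 a w Hb0 ltac:(fold r0; lra)).
    rewrite touch_test_at by auto. specialize (Hmax w Hwball). simpl in *. lra. }
  pose proof (Hsub _ _ _ x0 (cone_test_C2 n x _ a b _ _ U) (Hball x0 Hx0) Hloc (- c)
    (touch_inf_lap n x x0 b c Hr0 ltac:(fold r0; nra))).
  lra.
Qed.

Lemma slope_estimate x r M c :
  inRn n x -> 0 < r -> psubset (cball n x r) O -> 0 <= c -> K < c ->
  is_max_on (sphere n x r) u M ->
  forall w, cball n x r w -> u w <= u x + slope_bound c ((M - u x) / r) r * rdist n w x.
Proof.
  intros Hx Hr Hball Hc HKc [_ HM] w Hw.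
  set (b := slope_bound c ((M - u x) / r) r).
  assert (Hb1 : (M - u x) / r + c * r / 2 <= b) by apply Rmax_l.
  assert (Hb2 : (c + 1) * r <= b) by apply Rmax_r.
  assert (Hcone : u w <= cone n x (u x) b c w).
  { apply (comparison_with_cones x r); auto; [nra|lra|].
    intros z [Hz Hzr]. unfold cone. rewrite Hzr.
    specialize (HM z (conj Hz Hzr)).
    replace M with (u x + (M - u x) / r * r) in HM by (field; lra). nra. }
  unfold cone in Hcone. pose proof (pow2_ge_0 (rdist n w x)). nra.
Qed.

End ConeComparison.

Lemma slope_bound_ge c s r : (c + 1) * r <= slope_bound c s r.
Proof. apply Rmax_r. Qed.

Lemma slope_bound_shift c s d r : 0 <= d -> slope_bound c (s + d) r <= slope_bound c s r + d.
Proof.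
  intros Hd. unfold slope_bound. apply Rmax_lub.
  - pose proof (Rmax_l (s + c * r / 2) ((c + 1) * r)). lra.
  - pose proof (Rmax_r (s + c * r / 2) ((c + 1) * r)). lra.
Qed.

Lemma slope_bound_mono c s s' r : s <= s' -> slope_bound c s r <= slope_bound c s' r.
Proof.
  intros Hs. unfold slope_bound. apply Rmax_lub; [|apply Rmax_r].
  apply Rle_trans with (s' + c * r / 2); [lra|apply Rmax_l].
Qed.

Definition limsup_right0_le (f : R -> R) (S : R) : Prop :=
  forall eps, 0 < eps -> exists d, 0 < d /\ forall r, 0 < r < d -> f r < S + eps.

Definition liminf_right0_ge (f : R -> R) (S : R) : Prop :=
  forall eps, 0 < eps -> exists d, 0 < d /\ forall r, 0 < r < d -> S - eps < f r.

Lemma lim_right0_of_bounds f S : limsup_right0_le f S -> liminf_right0_ge f S -> lim_right0 f S.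
Proof.
  intros Hsup Hinf eps Heps.
  destruct (Hsup eps Heps) as [d1 [Hd1 H1]]. destruct (Hinf eps Heps) as [d2 [Hd2 H2]].
  exists (Rmin d1 d2). split; [apply Rmin_pos; auto|]. intros r Hr.
  pose proof (Rmin_l d1 d2). pose proof (Rmin_r d1 d2).
  specialize (H1 r ltac:(lra)). specialize (H2 r ltac:(lra)). apply Rabs_def1; lra.
Qed.

Lemma liminf_le_limsup f S1 S2 : liminf_right0_ge f S1 -> limsup_right0_le f S2 -> S1 <= S2.
Proof.
  intros Hinf Hsup. apply Rnot_lt_le. intros Hlt.
  destruct (Hinf ((S1 - S2) / 2)) as [d1 [Hd1 H1]]; [lra|].
  destruct (Hsup ((S1 - S2) / 2)) as [d2 [Hd2 H2]]; [lra|].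
  pose proof (Rmin_pos d1 d2 Hd1 Hd2). pose proof (Rmin_l d1 d2). pose proof (Rmin_r d1 d2).
  specialize (H1 (Rmin d1 d2 / 2) ltac:(lra)). specialize (H2 (Rmin d1 d2 / 2) ltac:(lra)). lra.
Qed.

Lemma limsup_right0_le_approx f S :
  (forall eps, 0 < eps -> exists T, T <= S + eps /\ limsup_right0_le f T) -> limsup_right0_le f S.
Proof.
  intros H eps Heps. destruct (H (eps / 2)) as [T [HT HfT]]; [lra|].
  destruct (HfT (eps / 2)) as [d [Hd Hf]]; [lra|]. exists d. split; auto.
  intros r Hr. specialize (Hf r Hr). lra.
Qed.

Lemma exists_inf_on_interval (h : R -> R) R1 : 0 < R1 -> (forall t, 0 < t < R1 -> 0 <= h t) ->
  exists S, 0 <= S /\ (forall t, 0 < t < R1 -> S <= h t) /\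
    (forall eps, 0 < eps -> exists t, 0 < t < R1 /\ h t < S + eps).
Proof.
  intros HR1 Hh.
  destruct (completeness (fun v => exists t, 0 < t < R1 /\ v = - h t)) as [m [Hub Hlub]].
  { exists 0. intros v [t [Ht ->]]. specialize (Hh t Ht). lra. }
  { exists (- h (R1 / 2)), (R1 / 2). split; auto. lra. }
  exists (- m). split; [|split].
  - assert (m <= 0); [|lra]. apply Hlub. intros v [t [Ht ->]]. specialize (Hh t Ht). lra.
  - intros t Ht. assert (- h t <= m) by (apply Hub; eauto). lra.
  - intros eps Heps. apply NNPP. intros Hno.
    assert (m <= m - eps); [|lra]. apply Hlub. intros v [t [Ht ->]].
    apply Rnot_lt_le. intros Hlt. apply Hno. exists t. split; auto. lra.
Qed.

Section AlmostMonotone.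

Variables (c R1 : R) (f : R -> R).
Hypothesis Hc : 0 < c.
Hypothesis Henv : forall r R, 0 < r < R -> R < R1 -> f r <= slope_bound c (f R) R.

Lemma envelope_almost_mono r R : 0 < r < R -> R < R1 ->
  slope_bound c (f r) r <= slope_bound c (f R) R + (c + 1) * r.
Proof.
  intros Hr HR. pose proof (Henv r R Hr HR). pose proof (slope_bound_ge c (f R) R).
  unfold slope_bound at 1. apply Rmax_lub; nra.
Qed.

Variable S : R.
Hypothesis HS_lb : forall R, 0 < R < R1 -> S <= slope_bound c (f R) R.
Hypothesis HS_inf : forall eps, 0 < eps -> exists R, 0 < R < R1 /\ slope_bound c (f R) R < S + eps.

Lemma limsup_le_envelope_inf : limsup_right0_le f S.
Proof.
  intros eps Heps. destruct (HS_inf eps Heps) as [R [HR HRS]]. exists R. split; [lra|].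
  intros r Hr. specialize (Henv r R ltac:(lra) ltac:(lra)). lra.
Qed.

(* If [S > 0], then [(c + 1) r < S <= max (f r + c r / 2, (c + 1) r)] forces [f r] up to [S]. *)
Lemma liminf_ge_envelope_inf : 0 < R1 -> 0 < S -> liminf_right0_ge f S.
Proof.
  intros HR1 HS eps Heps.
  exists (Rmin R1 (Rmin (S / (c + 1)) (eps / c))). split.
  { apply Rmin_pos; auto. apply Rmin_pos; apply Rdiv_lt_0_compat; lra. }
  intros r Hr.
  pose proof (Rmin_l R1 (Rmin (S / (c + 1)) (eps / c))) as Hm1.
  pose proof (Rmin_r R1 (Rmin (S / (c + 1)) (eps / c))) as Hm2.
  pose proof (Rmin_l (S / (c + 1)) (eps / c)) as Hm3. pose proof (Rmin_r (S / (c + 1)) (eps / c)) as Hm4.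
  specialize (HS_lb r ltac:(lra)).
  assert (Hsmall : (c + 1) * r < S).
  { apply Rlt_le_trans with ((c + 1) * (S / (c + 1))); [apply Rmult_lt_compat_l; lra|].
    right. field. lra. }
  assert (Hcr : c * r < eps).
  { apply Rlt_le_trans with (c * (eps / c)); [apply Rmult_lt_compat_l; lra|]. right. field. lra. }
  apply Rmax_Rle in HS_lb as [HS_lb|HS_lb]; lra.
Qed.

End AlmostMonotone.

Section CrossEstimate.

Variables (c R1 : R) (f g : R -> R).
Hypothesis Hc : 0 < c.
Hypothesis Hg_env : forall r R, 0 < r < R -> R < R1 -> g r <= slope_bound c (g R) R.
Hypothesis Hcross : forall r R, 0 < r < R -> 2 * R < R1 ->
  f r <= slope_bound c ((r * f r + slope_bound c (g (2 * R)) (2 * R) * (R + r)) / R) R.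

(* Letting [r -> 0] in the cross estimate at a fixed [R]. *)
Lemma limsup_cross_fixed R B : 0 < R -> 2 * R < R1 -> 0 <= B -> limsup_right0_le f B ->
  limsup_right0_le f (slope_bound c (slope_bound c (g (2 * R)) (2 * R)) R).
Proof.
  intros HR HR1 HB Hf eps Heps. set (E := slope_bound c (g (2 * R)) (2 * R)).
  assert (HE : 0 <= E) by (pose proof (slope_bound_ge c (g (2 * R)) (2 * R)); unfold E; nra).
  destruct (Hf 1 ltac:(lra)) as [d [Hd Hfd]].
  exists (Rmin (Rmin d R) (eps * R / (B + 1 + E))). split.
  { repeat apply Rmin_pos; auto. apply Rdiv_lt_0_compat; nra. }
  intros r Hr.
  pose proof (Rmin_l (Rmin d R) (eps * R / (B + 1 + E))) as Hm1.
  pose proof (Rmin_r (Rmin d R) (eps * R / (B + 1 + E))) as Hm2.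
  pose proof (Rmin_l d R) as Hm3. pose proof (Rmin_r d R) as Hm4.
  specialize (Hfd r ltac:(lra)).
  assert (Hrs : r * (B + 1 + E) < eps * R).
  { apply Rlt_le_trans with (eps * R / (B + 1 + E) * (B + 1 + E)).
    - apply Rmult_lt_compat_r; lra.
    - right. field. lra. }
  assert (Hshift : (r * f r + E * (R + r)) / R <= E + r * (B + 1 + E) / R).
  { replace ((r * f r + E * (R + r)) / R) with (E + r * (f r + E) / R) by (field; lra).
    apply Rplus_le_compat_l. unfold Rdiv.
    apply Rmult_le_compat_r; [apply Rlt_le, Rinv_0_lt_compat; lra|]. apply Rmult_le_compat_l; lra. }
  eapply Rle_lt_trans; [apply (Hcross r R); lra|]. fold E.
  eapply Rle_lt_trans; [apply slope_bound_mono, Hshift|].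
  eapply Rle_lt_trans; [apply slope_bound_shift|].
  - apply Rlt_le, Rdiv_lt_0_compat; nra.
  - assert (r * (B + 1 + E) / R < eps); [|lra].
    apply (Rmult_lt_reg_r R); auto. field_simplify; lra.
Qed.

Variables (Sf Sg : R).
Hypothesis HSf : limsup_right0_le f Sf.
Hypothesis HSg : forall eps, 0 < eps -> exists R, 0 < R < R1 /\ slope_bound c (g R) R < Sg + eps.
Hypothesis HSg0 : 0 <= Sg.

Lemma limsup_cross : limsup_right0_le f Sg.
Proof.
  apply limsup_right0_le_approx. intros eps Heps.
  destruct (HSg (eps / 2) ltac:(lra)) as [R' [HR' HgR']].
  set (R := Rmin (R' / 4) (eps / (8 * (c + 1)))).
  assert (HR : 0 < R) by (apply Rmin_pos; [lra|apply Rdiv_lt_0_compat; lra]).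
  assert (HRR' : R <= R' / 4) by apply Rmin_l.
  assert (HRc : (c + 1) * R <= eps / 8).
  { apply Rle_trans with ((c + 1) * (eps / (8 * (c + 1)))); [apply Rmult_le_compat_l, Rmin_r; lra|].
    right. field. lra. }
  exists (slope_bound c (slope_bound c (g (2 * R)) (2 * R)) R). split.
  - pose proof (envelope_almost_mono c R1 g Hc Hg_env (2 * R) R' ltac:(lra) ltac:(lra)).
    unfold slope_bound at 1. apply Rmax_lub; nra.
  - apply (limsup_cross_fixed R (Rmax Sf 0)); auto; [lra|apply Rmax_r|].
    intros e He. destruct (HSf e He) as [d [Hd Hfd]]. exists d. split; auto.
    intros r Hr. specialize (Hfd r Hr). pose proof (Rmax_l Sf 0). lra.
Qed.

End CrossEstimate.

Lemma liminf_ge0_of_neg_le f g R1 : 0 < R1 -> (forall r, 0 < r < R1 -> - f r <= g r) ->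
  limsup_right0_le g 0 -> liminf_right0_ge f 0.
Proof.
  intros HR1 Hfg Hg eps Heps. destruct (Hg eps Heps) as [d [Hd Hgd]].
  exists (Rmin d R1). split; [apply Rmin_pos; auto|]. intros r Hr.
  pose proof (Rmin_l d R1). pose proof (Rmin_r d R1).
  specialize (Hgd r ltac:(lra)). specialize (Hfg r ltac:(lra)). lra.
Qed.

Lemma common_limit (c R1 : R) (f g : R -> R) : 0 < c -> 0 < R1 ->
  (forall r R, 0 < r < R -> R < R1 -> f r <= slope_bound c (f R) R) ->
  (forall r R, 0 < r < R -> R < R1 -> g r <= slope_bound c (g R) R) ->
  (forall r R, 0 < r < R -> 2 * R < R1 ->
     f r <= slope_bound c ((r * f r + slope_bound c (g (2 * R)) (2 * R) * (R + r)) / R) R) ->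
  (forall r R, 0 < r < R -> 2 * R < R1 ->
     g r <= slope_bound c ((r * g r + slope_bound c (f (2 * R)) (2 * R) * (R + r)) / R) R) ->
  (forall r, 0 < r < R1 -> - f r <= g r) ->
  exists S, lim_right0 f S /\ lim_right0 g S.
Proof.
  intros Hc HR1 Hf_env Hg_env Hf_cross Hg_cross Hfg.
  assert (Hinf : forall h : R -> R, exists S, 0 <= S /\
            (forall t, 0 < t < R1 -> S <= slope_bound c (h t) t) /\
            (forall eps, 0 < eps -> exists t, 0 < t < R1 /\ slope_bound c (h t) t < S + eps)).
  { intros h. apply exists_inf_on_interval; auto. intros t Ht.
    pose proof (slope_bound_ge c (h t) t). nra. }
  destruct (Hinf f) as [Sf [HSf0 [HSf_lb HSf_inf]]].
  destruct (Hinf g) as [Sg [HSg0 [HSg_lb HSg_inf]]].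
  pose proof (limsup_le_envelope_inf c R1 f Hf_env Sf HSf_inf) as Uf.
  pose proof (limsup_le_envelope_inf c R1 g Hg_env Sg HSg_inf) as Ug.
  pose proof (limsup_cross c R1 f g Hc Hg_env Hf_cross Sf Sg Uf HSg_inf HSg0) as Xf.
  pose proof (limsup_cross c R1 g f Hc Hf_env Hg_cross Sg Sf Ug HSf_inf HSf0) as Xg.
  pose proof (liminf_ge_envelope_inf c R1 f Hc Sf HSf_lb HR1) as Lf.
  pose proof (liminf_ge_envelope_inf c R1 g Hc Sg HSg_lb HR1) as Lg.
  assert (HSfg : Sf = Sg).
  { assert (0 < Sf -> Sf <= Sg) by (intros; apply (liminf_le_limsup f); auto).
    assert (0 < Sg -> Sg <= Sf) by (intros; apply (liminf_le_limsup g); auto).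
    destruct (Rle_lt_or_eq_dec 0 Sf HSf0); lra. }
  subst Sg. exists Sf.
  destruct (Rle_lt_or_eq_dec 0 Sf HSf0) as [Hpos|<-].
  - split; apply lim_right0_of_bounds; auto.
  - split; apply lim_right0_of_bounds; auto.
    + apply (liminf_ge0_of_neg_le f g R1); auto.
    + apply (liminf_ge0_of_neg_le g f R1); auto.
      intros r Hr. specialize (Hfg r Hr). lra.
Qed.

Lemma cball_in_ball n x y r rho : rdist n x y + r < rho -> psubset (cball n x r) (ball n y rho).
Proof. intros Hr w [Hw Hwx]. split; auto. pose proof (rdist_triangle n w x y). lra. Qed.

Section SlopeEstimates.

Variables (n : nat) (U : pt -> Prop) (K c : R) (u : pt -> R) (y : pt) (rho : R) (f g : R -> R).
Hypothesis Hn : (1 <= n)%nat.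
Hypothesis HU : psubset U (inRn n).
Hypothesis Hy : inRn n y.
Hypothesis Hc : 0 < c.
Hypothesis HKc : K < c.
Hypothesis Hcont : continuous_on n (ball n y rho) u.
Hypothesis Hsub : visc_inf_sub n U (ball n y rho) K u.
Hypothesis Hsub_opp : visc_inf_sub n U (ball n y rho) K (fun x => - u x).
Hypothesis Hf : forall r, 0 < r < rho -> is_max_on (sphere n y r) u (u y + r * f r).
Hypothesis Hg : forall r, 0 < r < rho -> is_min_on (sphere n y r) u (u y - r * g r).

Lemma upper_estimate x r M w : inRn n x -> 0 < r -> rdist n x y + r < rho ->
  is_max_on (sphere n x r) u M -> cball n x r w ->
  u w <= u x + slope_bound c ((M - u x) / r) r * rdist n w x.
Proof.
  intros Hx Hr Hxr HM. apply (slope_estimate n U (ball n y rho) K u); auto; [|lra].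
  apply cball_in_ball; auto.
Qed.

Lemma lower_estimate x r m w : inRn n x -> 0 < r -> rdist n x y + r < rho ->
  is_min_on (sphere n x r) u m -> cball n x r w ->
  u x - slope_bound c ((u x - m) / r) r * rdist n w x <= u w.
Proof.
  intros Hx Hr Hxr Hm Hw.
  pose proof (slope_estimate n U (ball n y rho) K (fun z => - u z) HU
    (continuous_on_opp n _ u Hcont) Hsub_opp x r (- m) c Hx Hr (cball_in_ball n x y r rho Hxr)
    ltac:(lra) HKc (is_min_on_opp _ _ _ Hm) w Hw) as Hopp.
  cbv beta in Hopp. replace (- m - - u x) with (u x - m) in Hopp by ring. lra.
Qed.

Lemma slope_envelope r R : 0 < r < R -> R < rho -> f r <= slope_bound c (f R) R.
Proof.
  intros Hr HR. destruct (Hf r ltac:(lra)) as [[z [[Hz Hzr] Hzu]] _].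
  pose proof (upper_estimate y R (u y + R * f R) z Hy ltac:(lra) ltac:(rewrite rdist_refl; lra)
    (Hf R ltac:(lra)) ltac:(split; [exact Hz|lra])) as Hup.
  replace ((u y + R * f R - u y) / R) with (f R) in Hup by (field; lra).
  rewrite Hzr, Hzu in Hup. pose proof (slope_bound_ge c (f R) R). nra.
Qed.

(* Take [z] where [u] is maximal on the small sphere [|z - y| = r]; the lower estimate at [z]
   (radius [R], evaluated at [y]) bounds [f r], and the lower estimate at [y] (radius [2 R])
   bounds the minimum of [u] on [|w - z| = R]. *)
Lemma slope_cross r R : 0 < r < R -> 2 * R < rho ->
  f r <= slope_bound c ((r * f r + slope_bound c (g (2 * R)) (2 * R) * (R + r)) / R) R.
Proof.
  intros Hr HR. destruct (Hf r ltac:(lra)) as [[z [[Hz Hzr] Hzu]] _].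
  destruct (exists_sphere_min n u z R Hn Hz ltac:(lra)) as [m Hmin].
  { apply (continuous_on_subset n (ball n y rho)); auto. intros w Hw.
    apply (cball_in_ball n z y R rho); [lra|]. apply sphere_sub_cball, Hw. }
  pose proof Hmin as [[w [[Hw Hwz] Hwm]] _]. subst m.
  pose proof (lower_estimate z R (u w) y Hz ltac:(lra) ltac:(lra) Hmin
    ltac:(split; [exact Hy|rewrite rdist_sym; lra])) as Hlow_z.
  rewrite rdist_sym, Hzr in Hlow_z.
  assert (Hwy : rdist n w y <= R + r) by (pose proof (rdist_triangle n w z y); lra).
  pose proof (lower_estimate y (2 * R) (u y - 2 * R * g (2 * R)) w Hy ltac:(lra)
    ltac:(rewrite rdist_refl; lra) (Hg (2 * R) ltac:(lra)) ltac:(split; [exact Hw|lra])) as Hlow_y.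
  replace ((u y - (u y - 2 * R * g (2 * R))) / (2 * R)) with (g (2 * R)) in Hlow_y by (field; lra).
  set (E := slope_bound c (g (2 * R)) (2 * R)) in *.
  assert (HE : 0 <= E) by (pose proof (slope_bound_ge c (g (2 * R)) (2 * R)); unfold E; nra).
  assert (Hfr : f r <= slope_bound c ((u z - u w) / R) R).
  { set (s := slope_bound c ((u z - u w) / R) R) in *. apply (Rmult_le_reg_r r); [lra|]. nra. }
  eapply Rle_trans; [exact Hfr|]. apply slope_bound_mono.
  unfold Rdiv. apply Rmult_le_compat_r; [apply Rlt_le, Rinv_0_lt_compat; lra|].
  rewrite Hzu. nra.
Qed.

End SlopeEstimates.

Lemma slope_limits n U K c u y rho f g :
  (1 <= n)%nat -> psubset U (inRn n) -> inRn n y -> 0 < rho -> 0 < c -> K < c ->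
  continuous_on n (ball n y rho) u ->
  visc_inf_sub n U (ball n y rho) K u -> visc_inf_sub n U (ball n y rho) K (fun x => - u x) ->
  (forall r, 0 < r < rho -> is_max_on (sphere n y r) u (u y + r * f r)) ->
  (forall r, 0 < r < rho -> is_min_on (sphere n y r) u (u y - r * g r)) ->
  exists S, lim_right0 f S /\ lim_right0 g S.
Proof.
  intros Hn HU Hy Hrho Hc HKc Hcont Hsub Hsub_opp Hf Hg.
  assert (Hcont_opp : continuous_on n (ball n y rho) (fun x => - u x))
    by (apply continuous_on_opp, Hcont).
  assert (Hsub_opp_opp : visc_inf_sub n U (ball n y rho) K (fun x => - - u x)).
  { replace (fun x => - - u x) with u; auto. extensionality x. ring. }
  assert (Hf_opp : forall r, 0 < r < rho -> is_max_on (sphere n y r) (fun x => - u x) (- u y + r * g r)).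
  { intros r Hr. replace (- u y + r * g r) with (- (u y - r * g r)) by ring.
    apply is_min_on_opp, Hg, Hr. }
  assert (Hg_opp : forall r, 0 < r < rho -> is_min_on (sphere n y r) (fun x => - u x) (- u y - r * f r)).
  { intros r Hr. replace (- u y - r * f r) with (- (u y + r * f r)) by ring.
    apply is_max_on_opp, Hf, Hr. }
  apply (common_limit c rho f g Hc Hrho).
  - intros r R Hr HR. apply (slope_envelope n U K c u y rho f); auto.
  - intros r R Hr HR. apply (slope_envelope n U K c (fun x => - u x) y rho g); auto.
  - intros r R Hr HR. apply (slope_cross n U K c u y rho f g); auto.
  - intros r R Hr HR. apply (slope_cross n U K c (fun x => - u x) y rho g f); auto.
  - intros r Hr. destruct (Hf r Hr) as [[z [Hz _]] Hmax]. destruct (Hg r Hr) as [_ Hmin].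
    specialize (Hmax z Hz). specialize (Hmin z Hz). nra.
Qed.

Lemma visc_sol_inf_bounds n U O K u1 u2 (i : bool) :
  visc_sol n U u1 u2 -> psubset O U ->
  (forall z, O z -> Rabs (fst (other i u1 u2) z - snd (other i u1 u2) z) <= K) ->
  visc_inf_sub n U O K (fst (other i u1 u2)) /\ visc_inf_super n U O K (fst (other i u1 u2)).
Proof.
  intros [[_ [_ Hsub]] [_ [_ Hsup]]] HOU HK. split.
  - intros phi p q x0 Hphi Hx0 Hmax L HL. specialize (HK x0 Hx0).
    specialize (Hsub i phi p q x0 Hphi (HOU x0 Hx0) Hmax L HL).
    apply Rabs_le_inv in HK. lra.
  - intros phi p q x0 Hphi Hx0 Hmin L HL. specialize (HK x0 Hx0).
    specialize (Hsup i phi p q x0 Hphi (HOU x0 Hx0) Hmin L HL).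
    apply Rabs_le_inv in HK. lra.
Qed.

Lemma clos_incl n U : psubset U (inRn n) -> psubset U (clos n U).
Proof. intros HU z Hz. split; [apply HU, Hz|]. intros r Hr. exists z. rewrite rdist_refl. auto. Qed.

Lemma local_difference_bound n U u v y : is_open n U ->
  continuous_on n (clos n U) u -> continuous_on n (clos n U) v -> U y ->
  exists rho K, 0 < rho /\ 0 <= K /\ psubset (ball n y rho) U /\
    forall z, ball n y rho z -> Rabs (u z - v z) <= K.
Proof.
  intros [HU Hopen] Hu Hv Hy. pose proof (clos_incl n U HU) as Hcl.
  destruct (Hopen y Hy) as [r0 [Hr0 Hball]].
  destruct (Hu y (Hcl y Hy) 1 ltac:(lra)) as [du [Hdu Hu1]].
  destruct (Hv y (Hcl y Hy) 1 ltac:(lra)) as [dv [Hdv Hv1]].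
  exists (Rmin r0 (Rmin du dv)), (Rabs (u y - v y) + 2).
  pose proof (Rmin_l r0 (Rmin du dv)). pose proof (Rmin_r r0 (Rmin du dv)).
  pose proof (Rmin_l du dv). pose proof (Rmin_r du dv).
  assert (Hsub : psubset (ball n y (Rmin r0 (Rmin du dv))) U).
  { intros z [Hz Hzy]. apply Hball. split; auto. lra. }
  repeat split; auto.
  - repeat apply Rmin_pos; auto.
  - pose proof (Rabs_pos (u y - v y)). lra.
  - intros z Hz. pose proof (Hsub z Hz) as HzU. destruct Hz as [_ Hzy].
    specialize (Hu1 z (Hcl z HzU) ltac:(lra)). specialize (Hv1 z (Hcl z HzU) ltac:(lra)).
    replace (u z - v z) with ((u z - u y) + (u y - v y) - (v z - v y)) by ring.
    eapply Rle_trans; [apply Rabs_triang|]. rewrite Rabs_Ropp.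
    pose proof (Rabs_triang (u z - u y) (u y - v y)). lra.
Qed.

Lemma S_plus_is_max n u y r : (1 <= n)%nat -> inRn n y -> 0 < r ->
  continuous_on n (sphere n y r) u -> is_max_on (sphere n y r) u (u y + r * S_plus n u y r).
Proof.
  intros Hn Hy Hr Hu. unfold S_plus.
  replace (u y + r * ((sph_max n u y r - u y) / r)) with (sph_max n u y r) by (field; lra).
  unfold sph_max. apply epsilon_spec, exists_sphere_max; auto. lra.
Qed.

Lemma S_minus_is_min n u y r : (1 <= n)%nat -> inRn n y -> 0 < r ->
  continuous_on n (sphere n y r) u -> is_min_on (sphere n y r) u (u y - r * - S_minus n u y r).
Proof.
  intros Hn Hy Hr Hu. unfold S_minus.
  replace (u y - r * - ((sph_min n u y r - u y) / r)) with (sph_min n u y r) by (field; lra).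
  unfold sph_min. apply epsilon_spec, exists_sphere_min; auto. lra.
Qed.

Lemma lim_right0_opp f S : lim_right0 (fun r => - f r) S -> lim_right0 f (- S).
Proof.
  intros Hf eps Heps. destruct (Hf eps Heps) as [d [Hd H]]. exists d. split; auto.
  intros r Hr. replace (f r - - S) with (- (- f r - S)) by ring. rewrite Rabs_Ropp. auto.
Qed.

Lemma slopes_converge n U K u y rho :
  (1 <= n)%nat -> psubset U (inRn n) -> inRn n y -> 0 < rho -> 0 <= K ->
  continuous_on n (ball n y rho) u ->
  visc_inf_sub n U (ball n y rho) K u -> visc_inf_super n U (ball n y rho) K u ->
  exists Sp Sm, lim_right0 (S_plus n u y) Sp /\ lim_right0 (S_minus n u y) Sm /\ Sp = - Sm.
Proof.
  intros Hn HU Hy Hrho HK Hcont Hsub Hsup.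
  assert (Hsph : forall r, 0 < r < rho -> continuous_on n (sphere n y r) u).
  { intros r Hr. apply (continuous_on_subset n (ball n y rho)); auto.
    intros z [Hz Hzr]. split; auto. lra. }
  destruct (slope_limits n U K (K + 1) u y rho (S_plus n u y) (fun r => - S_minus n u y r))
    as [S [Hplus Hminus]]; auto; try lra.
  - apply visc_inf_super_opp, Hsup.
  - intros r Hr. apply S_plus_is_max; auto; lra.
  - intros r Hr. apply S_minus_is_min; auto; lra.
  - exists S, (- S). split; [|split]; auto; [apply lim_right0_opp, Hminus|ring].
Qed.

Theorem mainTheorem11 (n : nat) (U : pt -> Prop) (u1 u2 : pt -> R) :
  (1 <= n)%nat ->
  domain n U -> bdd n U -> smooth_boundary n U ->
  continuous_on n (clos n U) u1 ->
  continuous_on n (clos n U) u2 ->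
  visc_sol n U u1 u2 ->
  forall y, U y ->
  forall u, (u = u1 \/ u = u2) ->
    exists Sp Sm,
      lim_right0 (S_plus n u y) Sp /\
      lim_right0 (S_minus n u y) Sm /\
      Sp = - Sm.
Proof.
  intros Hn [Hopen _] _ _ Hc1 Hc2 Hsol y Hy u Hu.
  assert (Hi : exists i : bool, u = fst (other i u1 u2) /\
                 continuous_on n (clos n U) u /\ continuous_on n (clos n U) (snd (other i u1 u2)))
    by (destruct Hu as [->| ->]; [exists true|exists false]; auto).
  destruct Hi as [i [-> [Hu_cont Hv_cont]]].
  destruct (local_difference_bound n U _ _ y Hopen Hu_cont Hv_cont Hy)
    as [rho [K [Hrho [HK0 [Hball HK]]]]].
  destruct (visc_sol_inf_bounds n U _ K u1 u2 i Hsol Hball HK) as [Hsub Hsup].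
  apply (slopes_converge n U K _ y rho); auto.
  - apply Hopen.
  - apply Hopen, Hy.
  - apply (continuous_on_subset n (clos n U)); auto.
    intros z Hz. apply clos_incl; [apply Hopen|]. apply Hball, Hz.
Qed.
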